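(* There is an absolute constant $C$ such that for every $n$, every $b\in\mathbb R$, every $w\in\mathbb R^n$ and every $\epsilon>0$, the budget-additive function $f(x)=\min(b,\sum_{i=1}^nw_ix_i)$ on $\{0,1\}^n$ satisfies $R^{lin}_{\epsilon\text{-approx}}(f)\le C\min\left(\lceil\|w\|_1^2/\epsilon\rceil,\ n\right)$.
   Context: For $S\subseteq[n]$, $\chi_S(x)=\sum_{i\in S}x_i\pmod2$. Approximate randomized $\mathbb F_2$-sketch complexity: $R^{lin}_{\epsilon\text{-approx}}(f)$ is the smallest integer $k$ such that there exist a probability distribution over $k$-tuples of subsets $\mathbf S_1,\dots,\mathbf S_k\subseteq[n]$ and $g\colon\mathbb F_2^k\to\mathbb R$ with $\mathbb E_{\mathbf S_1,\dots,\mathbf S_k}[(g(\chi_{\mathbf S_1}(x),\dots,\chi_{\mathbf S_k}(x))-f(x))^2]\le\epsilon$ for every $x\in\mathbb F_2^n$. $\|w\|_1=\sum_i|w_i|$. *)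

(* Reals are modelled by an arbitrary archimedean field R. *)
From HB Require Import structures.
From mathcomp Require Import all_boot all_order all_algebra.
Set Implicit Arguments. Unset Strict Implicit. Unset Printing Implicit Defensive.
Import Order.TTheory GRing.Theory Num.Theory.
Local Open Scope ring_scope.

(* F_2 is modelled by bool (addition = addb); F_2^n = {ffun 'I_n -> bool}. *)
Definition chi (n : nat) (S : {set 'I_n}) (x : {ffun 'I_n -> bool}) : bool :=
  \big[addb/false]_(i in S) x i.

Definition sketch (n k : nat) (S : {ffun 'I_k -> {set 'I_n}})
  (x : {ffun 'I_n -> bool}) : {ffun 'I_k -> bool} :=
  [ffun j => chi (S j) x].

Definition is_distr (R : numDomainType) (T : finType) (p : T -> R) : Prop :=
  (forall t, 0 <= p t) /\ \sum_(t : T) p t = 1.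

Definition approx_sketchable (R : numDomainType) (n : nat)
  (f : {ffun 'I_n -> bool} -> R) (eps : R) (k : nat) : Prop :=
  exists (p : {ffun 'I_k -> {set 'I_n}} -> R) (g : {ffun 'I_k -> bool} -> R),
    is_distr p /\
    forall x : {ffun 'I_n -> bool},
      \sum_(S : {ffun 'I_k -> {set 'I_n}}) p S * (g (sketch S x) - f x) ^+ 2 <= eps.

(* R^lin_{eps-approx}(f) <= m  iff  some k <= m admits such a sketch
   (R^lin is the smallest such k). *)
Definition Rlin_approx_le (R : numDomainType) (n : nat)
  (f : {ffun 'I_n -> bool} -> R) (eps : R) (m : int) : Prop :=
  exists k : nat, (k%:Z <= m) /\ approx_sketchable f eps k.

Definition budget_additive (R : realDomainType) (n : nat) (b : R) (w : 'I_n -> R)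
  (x : {ffun 'I_n -> bool}) : R :=
  Num.min b (\sum_(i < n) w i * (x i)%:R).

Definition l1norm (R : numDomainType) (n : nat) (w : 'I_n -> R) : R :=
  \sum_(i < n) `|w i|.

From HB Require Import structures.
From mathcomp Require Import all_boot all_order all_algebra.
From mathcomp Require Import ring lra.
Import Order.TTheory GRing.Theory Num.Theory.
Local Open Scope ring_scope.

Set Implicit Arguments. Unset Strict Implicit. Unset Printing Implicit Defensive.

(* Since z |-> min(b, z) is 1-Lipschitz, it suffices to estimate the linear
   form <w,x> = sum_i w_i x_i by an unbiased random estimator of variance at
   most eps that is a linear combination  sum_l c_l chi_{S_l}(x)  of parities
   of independently drawn sets S_l; the estimator for f is then
   g(v) = min(b, sum_l c_l v_l)  (lemma [sketchable_of_unbiased_coords]).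
   The variance of a sum of independent coordinates is the sum of their
   variances ([prod_distr_var_sum]).
   - If w = 0, f is constant and the empty sketch computes it; if
     n <= ceil(|w|_1^2/eps), the deterministic sketch S_l = {l}, l < n,
     computes f exactly ([sketchable_exact] and its two instances).
   - Otherwise, with L = |w|_1 > 0, write w = w^+ - w^- and draw m sets for
     each part: a set is {i} with probability w^{+/-}_i / L and empty
     otherwise, and is weighted by +/- L/m.  Each coordinate has variance at
     most (L/m)^2, so 2m coordinates give variance <= 2 L^2/m
     ([sketchable_sampling]); m = 2 ceil(L^2/eps) makes this <= eps. *)

Definition mean (R : pzRingType) (T : finType) (p Y : T -> R) : R := \sum_t p t * Y t.

Definition var (R : pzRingType) (T : finType) (p Y : T -> R) : R :=
  \sum_t p t * (Y t - mean p Y) ^+ 2.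

Lemma sum_point_mass (R : pzRingType) (T : finType) (s : T) (F : T -> R) :
  \sum_t (t == s)%:R * F t = F s.
Proof.
by rewrite (bigD1 s) //= eqxx mul1r big1 ?addr0 // => t /negbTE ->; rewrite mul0r.
Qed.

Lemma point_mass_is_distr (R : numDomainType) (T : finType) (s : T) :
  is_distr (fun t : T => (t == s)%:R : R).
Proof.
split=> [t|]; first exact: ler0n.
by have := sum_point_mass s (fun _ => 1 : R); under eq_bigr do rewrite mulr1.
Qed.

Lemma var_le (R : realDomainType) (T : finType) (p Y : T -> R) (B : R) :
  is_distr p -> (forall t, (Y t - mean p Y) ^+ 2 <= B) -> var p Y <= B.
Proof.
move=> [p_ge0 p_sum1] devB.
apply: le_trans (_ : \sum_t p t * B <= _); first by apply: ler_sum => t _; exact: ler_wpM2l.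
by rewrite -mulr_suml p_sum1 mul1r.
Qed.

Section IndependentCoordinates.
Variables (R : realFieldType) (k : nat) (T : finType) (q : 'I_k -> T -> R).

Definition prod_distr (S : {ffun 'I_k -> T}) : R := \prod_l q l (S l).

Lemma prod_distr_prod (F : 'I_k -> T -> R) :
  \sum_S prod_distr S * \prod_l F l (S l) = \prod_l mean (q l) (F l).
Proof. by rewrite bigA_distr_bigA; apply: eq_bigr => S _; rewrite -big_split. Qed.

Hypothesis q_sum1 : forall l, \sum_t q l t = 1.

Lemma prod_distr_is_distr : (forall l t, 0 <= q l t) -> is_distr prod_distr.
Proof.
move=> q_ge0; split=> [S|]; first by apply: prodr_ge0 => l _; exact: q_ge0.
by rewrite -bigA_distr_bigA big1.
Qed.

Let prod_at (l : 'I_k) (a : 'I_k -> R) : \prod_j (if j == l then a j else 1) = a l.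
Proof. by rewrite -big_mkcond big_pred1_eq. Qed.

Let mean_at (l j : 'I_k) (F : T -> R) :
  mean (q j) (fun t => if j == l then F t else 1) = if j == l then mean (q l) F else 1.
Proof.
by case: eqP => [->|_] //; rewrite /mean; under eq_bigr do rewrite mulr1.
Qed.

Lemma prod_distr_pair (l l' : 'I_k) (F G : T -> R) : l != l' ->
  \sum_S prod_distr S * (F (S l) * G (S l')) = mean (q l) F * mean (q l') G.
Proof.
move=> neq_ll'.
pose H j t := (if j == l then F t else 1) * (if j == l' then G t else 1).
have -> : \sum_S prod_distr S * (F (S l) * G (S l')) =
    \sum_S prod_distr S * \prod_j H j (S j).
  by apply: eq_bigr => S _; rewrite big_split /= !(prod_at _ (fun j => _ (S j))).
rewrite prod_distr_prod -(prod_at l (fun _ => mean (q l) F)).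
rewrite -(prod_at l' (fun _ => mean (q l') G)) -big_split /=.
apply: eq_bigr => j _; rewrite /mean /H.
case: (eqVneq j l) => [->|_].
  by rewrite (negbTE neq_ll') mulr1; under eq_bigr do rewrite mulr1.
rewrite mul1r; case: (eqVneq j l') => [->|_]; first by under eq_bigr do rewrite mul1r.
by under eq_bigr do rewrite mulr1 mulr1.
Qed.

Lemma prod_distr_coord (l : 'I_k) (F : T -> R) :
  \sum_S prod_distr S * F (S l) = mean (q l) F.
Proof.
under eq_bigr do rewrite -(prod_at l (fun j => F (_ j))).
rewrite (prod_distr_prod (fun j t => if j == l then F t else 1)).
rewrite -[RHS](prod_at l (fun _ => mean (q l) F)).
by apply: eq_bigr => j _; rewrite mean_at.
Qed.

Lemma prod_distr_var_sum (Y : 'I_k -> T -> R) (d : 'I_k -> R) :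
  (forall l, var (q l) (Y l) <= d l) ->
  \sum_S prod_distr S * (\sum_l (Y l (S l) - mean (q l) (Y l))) ^+ 2 <= \sum_l d l.
Proof.
move=> var_le_d.
pose Z l t := Y l t - mean (q l) (Y l).
have mean_Z l : mean (q l) (Z l) = 0.
  by rewrite /mean; under eq_bigr do rewrite mulrBr; rewrite sumrB -mulr_suml q_sum1 mul1r subrr.
have cross l l' : l' != l -> \sum_S prod_distr S * (Z l (S l) * Z l' (S l')) = 0.
  by rewrite eq_sym => ne; rewrite prod_distr_pair // mean_Z mul0r.
have square_sum (S : {ffun 'I_k -> T}) :
    (\sum_l Z l (S l)) ^+ 2 = \sum_l \sum_l' Z l (S l) * Z l' (S l').
  by rewrite expr2 mulr_suml; apply: eq_bigr => l _; rewrite mulr_sumr.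
under eq_bigr do rewrite square_sum mulr_sumr.
rewrite exchange_big /=; apply: ler_sum => l _.
under eq_bigr => S _ do rewrite mulr_sumr.
rewrite exchange_big (bigD1 l) //= [X in _ + X]big1 ?addr0 => [|l' ?]; last exact: cross.
under eq_bigr do rewrite -expr2.
by rewrite (prod_distr_coord l (fun t => Z l t ^+ 2)); exact: var_le_d.
Qed.

End IndependentCoordinates.

Lemma min_sub_sqr_le (R : realDomainType) (b z z' : R) :
  (Num.min b z - Num.min b z') ^+ 2 <= (z - z') ^+ 2.
Proof.
by case: (leP b z) => ?; case: (leP b z') => ?; rewrite ?subrr ?expr0n ?sqr_ge0 //=; nra.
Qed.

Lemma sketchable_of_unbiased_coords (R : realFieldType) (n k : nat) (b eps : R)
    (w : 'I_n -> R) (q : 'I_k -> {set 'I_n} -> R) (c d : 'I_k -> R) :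
  (forall l t, 0 <= q l t) -> (forall l, \sum_t q l t = 1) ->
  (forall x, \sum_l mean (q l) (fun t => c l * (chi t x)%:R) = \sum_i w i * (x i)%:R) ->
  (forall x l, var (q l) (fun t => c l * (chi t x)%:R) <= d l) ->
  \sum_l d l <= eps ->
  approx_sketchable (budget_additive b w) eps k.
Proof.
move=> q_ge0 q_sum1 unbiased var_le_d sum_d_le.
exists (prod_distr q), (fun v : {ffun 'I_k -> bool} => Num.min b (\sum_l c l * (v l)%:R)).
split; first exact: prod_distr_is_distr.
move=> x; apply: le_trans sum_d_le; apply: le_trans (prod_distr_var_sum q_sum1 (var_le_d x)).
apply: ler_sum => S _; apply: ler_wpM2l; first by apply: prodr_ge0 => l _.
rewrite /budget_additive -unbiased sumrB.
under eq_bigr do rewrite ffunE.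
exact: min_sub_sqr_le.
Qed.

Lemma sketchable_exact (R : realDomainType) (n k : nat) (f : {ffun 'I_n -> bool} -> R)
    (eps : R) (S0 : {ffun 'I_k -> {set 'I_n}}) (g : {ffun 'I_k -> bool} -> R) :
  0 <= eps -> (forall x, g (sketch S0 x) = f x) -> approx_sketchable f eps k.
Proof.
move=> eps_ge0 gS0; exists (fun S => (S == S0)%:R), g; split; first exact: point_mass_is_distr.
by move=> x; rewrite (sum_point_mass S0 (fun S => (g (sketch S x) - f x) ^+ 2)) gS0 subrr expr0n.
Qed.

Lemma sketchable_singletons (R : realDomainType) (n : nat) (b eps : R) (w : 'I_n -> R) :
  0 <= eps -> approx_sketchable (budget_additive b w) eps n.
Proof.
move=> eps_ge0; apply: (sketchable_exact (S0 := [ffun i => [set i]])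
  (g := fun v : {ffun 'I_n -> bool} => Num.min b (\sum_i w i * (v i)%:R))) => // x.
by congr Num.min; apply: eq_bigr => i _; rewrite !ffunE /chi big_set1.
Qed.

Lemma l1norm_ge0 (R : realDomainType) (n : nat) (w : 'I_n -> R) : 0 <= l1norm w.
Proof. exact: sumr_ge0. Qed.

Lemma sketchable_zero_weights (R : realDomainType) (n : nat) (b eps : R) (w : 'I_n -> R) :
  0 <= eps -> l1norm w = 0 -> approx_sketchable (budget_additive b w) eps 0.
Proof.
move=> eps_ge0 /eqP; rewrite psumr_eq0 // => /allP w0.
apply: (sketchable_exact (S0 := [ffun l => set0]) (g := fun _ => Num.min b 0)) => // x.
rewrite /budget_additive big1 // => i _.
by have /normr0_eq0 -> := eqP (w0 i (mem_index_enum i)); rewrite mul0r.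
Qed.

Definition singleton_distr (R : fieldType) (n : nat) (L : R) (v : 'I_n -> R)
    (t : {set 'I_n}) : R :=
  (\sum_i v i / L * (t == [set i])%:R) + (1 - \sum_i v i / L) * (t == set0)%:R.

Lemma mean_singleton_distr (R : fieldType) (n : nat) (L : R) (v : 'I_n -> R)
    (F : {set 'I_n} -> R) :
  mean (singleton_distr L v) F =
    (\sum_i v i / L * F [set i]) + (1 - \sum_i v i / L) * F set0.
Proof.
rewrite /mean /singleton_distr; under eq_bigr do rewrite mulrDl.
rewrite big_split /=; congr (_ + _); last first.
  by under eq_bigr do rewrite -mulrA; rewrite -mulr_sumr sum_point_mass.
under eq_bigr do rewrite mulr_suml.
rewrite exchange_big /=; apply: eq_bigr => i _.
by rewrite -(sum_point_mass [set i] F) mulr_sumr; apply: eq_bigr => t _; rewrite mulrA.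
Qed.

Lemma mean_singleton_chi (R : fieldType) (n : nat) (L c : R) (v : 'I_n -> R)
    (x : {ffun 'I_n -> bool}) :
  mean (singleton_distr L v) (fun t => c * (chi t x)%:R) = c * (\sum_i v i * (x i)%:R) / L.
Proof.
rewrite mean_singleton_distr /chi big_set0 mulr0 mulr0 addr0 -mulrA mulr_suml mulr_sumr.
by apply: eq_bigr => i _; rewrite big_set1 mulrCA mulrAC.
Qed.

Section SingletonSampling.
Variables (R : realFieldType) (n : nat) (L : R) (v : 'I_n -> R).
Hypotheses (L_gt0 : 0 < L) (v_ge0 : forall i, 0 <= v i) (sum_v_le : \sum_i v i <= L).

Let sum_v_div_le1 : \sum_i v i / L <= 1.
Proof. by rewrite -mulr_suml ler_pdivrMr // mul1r. Qed.

Lemma singleton_distr_is_distr : is_distr (singleton_distr L v).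
Proof.
split=> [t|].
  apply: addr_ge0; last by rewrite mulr_ge0 ?ler0n ?subr_ge0 ?sum_v_div_le1.
  by apply: sumr_ge0 => i _; rewrite mulr_ge0 ?ler0n ?divr_ge0 ?v_ge0 ?(ltW L_gt0).
transitivity (mean (singleton_distr L v) (fun _ => 1)).
  by rewrite /mean; under [RHS]eq_bigr do rewrite mulr1.
by rewrite mean_singleton_distr mulr1; under eq_bigr do rewrite mulr1; rewrite addrC subrK.
Qed.

(* A coordinate with values in {0, c} has variance at most c^2. *)
Lemma var_singleton_chi (c : R) (x : {ffun 'I_n -> bool}) :
  var (singleton_distr L v) (fun t => c * (chi t x)%:R) <= c ^+ 2.
Proof.
apply: var_le; first exact: singleton_distr_is_distr.
move=> t; rewrite mean_singleton_chi -mulrA -mulrBr exprMn -[leRHS]mulr1.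
apply: ler_wpM2l; first exact: sqr_ge0.
set a := _ / L; have a_ge0 : 0 <= a.
  by rewrite divr_ge0 ?(ltW L_gt0) // sumr_ge0 // => i _; rewrite mulr_ge0 ?v_ge0.
have a_le1 : a <= 1.
  rewrite ler_pdivrMr // mul1r; apply: le_trans sum_v_le; apply: ler_sum => i _.
  by rewrite ler_piMr ?v_ge0 //; case: (x i).
by case: (chi t x); rewrite /=; nra.
Qed.

End SingletonSampling.

Lemma ceil_natP (R : archiRealDomainType) (y : R) :
  0 <= y -> exists2 M : nat, Num.ceil y = M%:Z & y <= M%:R.
Proof.
move=> y_ge0; have ceil_y_ge0 : 0 <= Num.ceil y.
  by rewrite ceil_ge0 (lt_le_trans _ y_ge0) // oppr_lt0.
exists `|Num.ceil y|%N; first by rewrite gez0_abs.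
by rewrite natr_absz ger0_norm //; exact: ceil_ge.
Qed.

Definition pos_part (R : realDomainType) (n : nat) (w : 'I_n -> R) (i : 'I_n) : R :=
  Num.max (w i) 0.

Definition neg_part (R : realDomainType) (n : nat) (w : 'I_n -> R) (i : 'I_n) : R :=
  Num.max (- w i) 0.

Section PositiveNegativeParts.
Variables (R : realDomainType) (n : nat) (w : 'I_n -> R).

Lemma pos_sub_neg_part (i : 'I_n) : pos_part w i - neg_part w i = w i.
Proof.
rewrite /pos_part /neg_part; case: (leP 0 (w i)) => [w_ge0|w_lt0].
  by rewrite max_r ?subr0 // oppr_le0.
by rewrite max_l ?sub0r ?opprK // oppr_ge0 ltW.
Qed.

Lemma pos_part_ge0 (i : 'I_n) : 0 <= pos_part w i.
Proof. by rewrite le_max lexx orbT. Qed.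

Lemma neg_part_ge0 (i : 'I_n) : 0 <= neg_part w i.
Proof. by rewrite le_max lexx orbT. Qed.

Lemma sum_pos_part_le : \sum_i pos_part w i <= l1norm w.
Proof. by apply: ler_sum => i _; rewrite ge_max normr_ge0 ler_norm. Qed.

Lemma sum_neg_part_le : \sum_i neg_part w i <= l1norm w.
Proof. by apply: ler_sum => i _; rewrite ge_max normr_ge0 -normrN ler_norm. Qed.

End PositiveNegativeParts.

(* The sampling sketch: m coordinates sample w^+ and carry weight L/m, m more
   sample w^- and carry weight -L/m, where L = |w|_1.  Its total variance is
   2m (L/m)^2 = 2 L^2 / m. *)
Lemma sketchable_sampling (R : realFieldType) (n m : nat) (b eps : R) (w : 'I_n -> R) :
  0 < l1norm w -> (0 < m)%N -> 2 * l1norm w ^+ 2 <= eps * m%:R ->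
  approx_sketchable (budget_additive b w) eps (m + m).
Proof.
set L := l1norm w => L_gt0 m_gt0 L_le.
have m_neq0 : (m%:R : R) != 0 by rewrite pnatr_eq0 -lt0n.
pose v (l : 'I_(m + m)) := if (l < m)%N then pos_part w else neg_part w.
pose c (l : 'I_(m + m)) := if (l < m)%N then L / m%:R else - (L / m%:R).
have v_ge0 l i : 0 <= v l i.
  by rewrite /v; case: ifP => _; [exact: pos_part_ge0 | exact: neg_part_ge0].
have sum_v_le l : \sum_i v l i <= L.
  by rewrite /v; case: ifP => _; [exact: sum_pos_part_le | exact: sum_neg_part_le].
have q_distr l := singleton_distr_is_distr L_gt0 (v_ge0 l) (sum_v_le l).
apply: (@sketchable_of_unbiased_coords _ _ _ b eps w (fun l => singleton_distr L (v l)) c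
  (fun l => c l ^+ 2)).
- by move=> l; case: (q_distr l).
- by move=> l; case: (q_distr l).
- move=> x; under eq_bigr do rewrite mean_singleton_chi.
  under [RHS]eq_bigr do rewrite -pos_sub_neg_part mulrBl.
  rewrite big_split_ord sumrB /=.
  set A := \sum_i pos_part w i * _; set B := \sum_i neg_part w i * _.
  rewrite (eq_bigr (fun _ => L / m%:R * A / L)) => [|i _]; last by rewrite /c /v /= ltn_ord.
  rewrite [X in _ + X](eq_bigr (fun _ => - (L / m%:R) * B / L)) => [|i _]; last first.
    by rewrite /c /v /= ltnNge leq_addr.
  rewrite !sumr_const !card_ord -[X in X + _ = _]mulr_natr -[X in _ + X = _]mulr_natr.
  by field; rewrite m_neq0 gt_eqF.
- by move=> x l; exact: var_singleton_chi.
- rewrite (eq_bigr (fun _ => (L / m%:R) ^+ 2)) => [|l _]; last by rewrite /c; case: ifP; rewrite ?sqrrN.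
  rewrite sumr_const card_ord -[_ *+ (m + m)]mulr_natr natrD.
  have -> : (L / m%:R) ^+ 2 * (m%:R + m%:R) = 2 * L ^+ 2 / m%:R by field.
  by rewrite ler_pdivrMr ?ltr0n.
Qed.

Theorem mainTheorem16 :
  exists C : nat,
  forall (R : archiRealFieldType) (n : nat) (b : R) (w : 'I_n -> R) (eps : R),
    0 < eps ->
    Rlin_approx_le (budget_additive b w) eps
      (C%:Z * Num.min (Num.ceil (l1norm w ^+ 2 / eps)) n%:Z).
Proof.
exists 4%N => R n b w eps eps_gt0.
have [M -> le_M] := ceil_natP (divr_ge0 (sqr_ge0 (l1norm w)) (ltW eps_gt0)).
have [L0 | L_neq0] := eqVneq (l1norm w) 0.
  exists 0%N; split; last exact: sketchable_zero_weights (ltW eps_gt0) L0.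
  by rewrite mulr_ge0 // le_min !lez_nat.
case: (leqP n M) => [n_le_M | M_lt_n].
  exists n; split; last exact: sketchable_singletons (ltW eps_gt0).
  by rewrite min_r ?lez_nat // leq_pmull.
have L_gt0 : 0 < l1norm w by rewrite lt_def L_neq0 l1norm_ge0.
have L_le : l1norm w ^+ 2 <= eps * M%:R by rewrite mulrC -ler_pdivrMr.
have M_gt0 : (0 < M)%N.
  by rewrite lt0n; apply: contraTneq L_le => ->; rewrite mulr0 -ltNge exprn_gt0.
exists (2 * M + 2 * M)%N; split.
  by rewrite min_l ?lez_nat ?(ltnW M_lt_n) // -mulnDl.
by apply: sketchable_sampling; rewrite ?muln_gt0 // natrM; nra.
Qed.
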